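(* The graph $T_6$ is a minimal non-word-representable graph: $T_6$ is not word-representable, but every graph obtained from $T_6$ by deleting one vertex is word-representable.
   Context: A graph $G=(V,E)$ is word-representable if there exists a word $w$ over the alphabet $V$ such that for all distinct $x,y\in V$, the letters $x$ and $y$ alternate in $w$ if and only if $xy\in E$ (alternation meaning that deleting all letters other than $x$ and $y$ leaves $xyxy\cdots$ or $yxyx\cdots$). The graph $T_6$ has vertex set $\{1,\dots,9\}$; the vertices $1,2,3,4,5$ form a clique, the vertices $6,7,8,9$ form an independent set, and the remaining edges are: $6$ is adjacent to $1,2,3$; $7$ is adjacent to $1,2$; $8$ is adjacent to $1,4$; $9$ is adjacent to $2,5$. *)

From mathcomp Require Import all_boot all_order.
Set Implicit Arguments. Unset Strict Implicit. Unset Printing Implicit Defensive.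

(* A simple graph: vertex set a finType T, symmetric irreflexive edge relation e. *)

Definition alternate (T : eqType) (w : seq T) (x y : T) : bool :=
  sorted (fun a b => a != b) [seq z <- w | (z == x) || (z == y)].

Definition word_representable (T : finType) (e : rel T) : Prop :=
  exists w : seq T, (forall x : T, x \in w) /\
    forall x y : T, x != y -> (alternate w x y <-> e x y).

Definition del_vertex_type (T : finType) (v : T) := {x : T | x != v}.
Definition del_vertex (T : finType) (e : rel T) (v : T) : rel (del_vertex_type v) :=
  fun x y => e (val x) (val y).

(* T6 on vertices 'I_9, where ordinal i represents vertex i+1 of the paper. *)
Definition T6_edge_nat (a b : nat) : bool :=
  [&& (1 <= a <= 5), (1 <= b <= 5) & a != b]
  || ((a == 6) && (b \in [:: 1; 2; 3]))
  || ((a == 7) && (b \in [:: 1; 2]))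
  || ((a == 8) && (b \in [:: 1; 4]))
  || ((a == 9) && (b \in [:: 2; 5])).

Definition T6 : rel 'I_9 := fun i j =>
  T6_edge_nat i.+1 j.+1 || T6_edge_nat j.+1 i.+1.
Arguments del_vertex {T} e v.

From mathcomp Require Import all_boot all_order.
Set Implicit Arguments. Unset Strict Implicit. Unset Printing Implicit Defensive.

(* The first occurrences of the letters of a word representing a graph order
   its vertices, and this order has no shortcut on four vertices: if
   a < b < c < d and a b, b c, c d, a d are edges, then so are a c and b d.
   In T6, let v be an outside vertex adjacent to the clique vertices n1, n2
   and not to the clique vertex k.  If exactly one of v, k lay between n1 and
   n2, the cycle v n1 k n2 would be such a shortcut without the chord v k.  So
   all clique non-neighbours of v lie on the same side of the pair n1, n2, and
   none of the 120 orders of the clique {1, ..., 5} achieves this for all of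
   6, 7, 8 and 9.  Each vertex-deleted subgraph is represented by an explicit
   word. *)


Section Alternation.
Variable T : eqType.
Implicit Types (x y : T) (w : seq T).

(* The flag [b] records that one more [x] than [y] has been read, so that
   [alt_from x y w] says that the [x]'s and [y]'s of [w] read [x y x y ...]. *)
Fixpoint alt_run x y (b : bool) w : bool :=
  if w is z :: w' then
    if z == x then ~~ b && alt_run x y true w'
    else if z == y then b && alt_run x y false w'
    else alt_run x y b w'
  else true.

Definition alt_from x y w := alt_run x y false w.

Lemma alt_runE x y b w : x != y ->
  alt_run x y b w = path (fun a c => a != c) (if b then x else y)
                      [seq z <- w | (z == x) || (z == y)].
Proof.
move=> nxy; elim: w b => [|z w IH] b //=.
case: (eqVneq z x) => [->|zx] /=.
  by rewrite IH; case: b => /=; rewrite ?eqxx // eq_sym nxy.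
case: (eqVneq z y) => [->|zy] /=; last by rewrite IH.
by rewrite IH; case: b => /=; rewrite ?eqxx ?nxy.
Qed.

Lemma alternateE w x y : x != y ->
  alternate w x y = alt_from x y w || alt_from y x w.
Proof.
move=> nxy; rewrite /alternate /alt_from alt_runE // alt_runE 1?eq_sym //=.
rewrite (eq_filter (a2 := fun z => (z == x) || (z == y))); last by move=> z; rewrite orbC.
case E: [seq z <- w | (z == x) || (z == y)] => [|z f] //=.
have : z \in [seq z <- w | (z == x) || (z == y)] by rewrite E mem_head.
rewrite mem_filter => /andP[/orP[]/eqP-> _].
  by rewrite eqxx /= orbF (eq_sym y x) nxy.
by rewrite eqxx nxy.
Qed.

Lemma alt_from_index w x y : x != y -> alt_from x y w -> y \in w ->
  index x w < index y w.
Proof.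
move=> nxy; elim: w => //= z w IH; rewrite /alt_from /= inE.
case: (eqVneq z x) => [->|zx]; first by rewrite eq_sym (negbTE nxy).
by case: (eqVneq z y) => //= zy /IH; rewrite eq_sym (negbTE zy).
Qed.

Lemma alt_from_of_index w x y : x != y -> alternate w x y ->
  index x w < index y w -> alt_from x y w.
Proof.
move=> nxy; rewrite alternateE // => /orP[//|yx] lt_xy.
have xw : x \in w by rewrite -index_mem (leq_trans lt_xy) ?index_size.
by move: lt_xy; rewrite ltnNge ltnW // alt_from_index // eq_sym.
Qed.

(* Counting letters in prefixes, (#a - #b) + (#b - #c) + (#c - #d) = #a - #d;
   if all four differences stay in {0, 1}, then so do #a - #c and #b - #d. *)
Lemma alt_run_chain a b c d w (s1 s2 s3 s4 : bool) : uniq [:: a; b; c; d] ->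
  s1 + s2 + s3 = s4 ->
  alt_run a b s1 w -> alt_run b c s2 w -> alt_run c d s3 w -> alt_run a d s4 w ->
  alt_run a c (s1 || s2) w && alt_run b d (s2 || s3) w.
Proof.
rewrite /= !inE !negb_or => /and4P[/and3P[ab ac ad] /andP[bc bd] cd _].
elim: w s1 s2 s3 s4 => [|z w IH] s1 s2 s3 s4 sum //=.
case: (eqVneq z a) => [->|_].
  rewrite ?(negbTE ab, negbTE ac, negbTE ad, negbTE bc, negbTE bd, negbTE cd).
  by case: s1 s2 s3 s4 sum => [] [] [] [] //= _ h1 h2 h3 h4; apply: (IH true false false true).
case: (eqVneq z b) => [->|_].
  rewrite ?(negbTE ab, negbTE ac, negbTE ad, negbTE bc, negbTE bd, negbTE cd).
  by case: s1 s2 s3 s4 sum => [] [] [] [] //= _ h1 h2 h3 h4; apply: (IH false true false true).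
case: (eqVneq z c) => [->|_].
  rewrite ?(negbTE ab, negbTE ac, negbTE ad, negbTE bc, negbTE bd, negbTE cd).
  by case: s1 s2 s3 s4 sum => [] [] [] [] //= _ h1 h2 h3 h4; apply: (IH false false true true).
case: (z == d); last exact: IH.
by case: s1 s2 s3 s4 sum => [] [] [] [] //= _ h1 h2 h3 h4; apply: (IH false false false false).
Qed.

Lemma alt_from_chain a b c d w : uniq [:: a; b; c; d] ->
  alt_from a b w -> alt_from b c w -> alt_from c d w -> alt_from a d w ->
  alt_from a c w && alt_from b d w.
Proof. by move=> abcd; apply: (alt_run_chain (s4 := false)). Qed.

End Alternation.

Definition between (T : Type) (r : T -> nat) (x y z : T) :=
  (r x < r y < r z) || (r z < r y < r x).

Section ShortcutFree.
Variables (T : eqType) (e : rel T).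

Definition shortcut4_free (r : T -> nat) : Prop :=
  forall a b c d, r a < r b -> r b < r c -> r c < r d ->
    e a b -> e b c -> e c d -> e a d -> e a c && e b d.

Lemma first_occurrence_shortcut4_free w :
  (forall x y, x != y -> alternate w x y <-> e x y) -> shortcut4_free (index ^~ w).
Proof.
move=> w_repr a b c d ab bc cd eab ebc ecd ead.
have neq x y : index x w < index y w -> x != y.
  by move=> lt_xy; apply: contraTneq lt_xy => ->; rewrite ltnn.
have alt x y : index x w < index y w -> e x y -> alt_from x y w.
  move=> lt_xy exy; have nxy := neq _ _ lt_xy.
  by apply: alt_from_of_index lt_xy => //; apply/(w_repr _ _ nxy).
have ac := ltn_trans ab bc; have bd := ltn_trans bc cd; have ad := ltn_trans ac cd.
have abcd : uniq [:: a; b; c; d] by rewrite /= !inE !negb_or !neq.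
have /andP[acw bdw] := alt_from_chain abcd (alt _ _ ab eab) (alt _ _ bc ebc)
                                          (alt _ _ cd ecd) (alt _ _ ad ead).
by apply/andP; split; [apply/(w_repr _ _ (neq _ _ ac)) | apply/(w_repr _ _ (neq _ _ bd))];
  rewrite alternateE ?neq ?acw ?bdw.
Qed.

Section Between.
Variable r : T -> nat.
Hypotheses (e_sym : symmetric e) (r_inj : injective r) (r_free : shortcut4_free r).

Lemma between_nonadjacent_inside v k n1 n2 :
  e v n1 -> e v n2 -> e k n1 -> e k n2 -> ~~ e v k ->
  r n1 < r v < r n2 -> r n1 < r k < r n2.
Proof.
move=> vn1 vn2 kn1 kn2 vk /andP[n1v vn2r].
have n1v_e : e n1 v by rewrite e_sym.
have kv : e k v = false by rewrite e_sym (negbTE vk).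
have rk_neq x : e v x -> r k != r x by move=> vx; apply: contraNneq vk => /r_inj->.
(* Otherwise [k n1 v n2] or [n1 v n2 k] would be a shortcut lacking [v k]. *)
case: (ltngtP (r k) (r n1)) => [kn1r|_|/eqP]; last by rewrite (negbTE (rk_neq _ vn1)).
  by have /andP[] := r_free kn1r n1v vn2r kn1 n1v_e vn2 kn2; rewrite kv.
case: (ltngtP (r k) (r n2)) => [//|n2k|/eqP]; last by rewrite (negbTE (rk_neq _ vn2)).
have n2k_e : e n2 k by rewrite e_sym.
have n1k_e : e n1 k by rewrite e_sym.
by have /andP[_] := r_free n1v vn2r n2k n1v_e vn2 n2k_e n1k_e; rewrite (negbTE vk).
Qed.

Lemma between_nonadjacent v k n1 n2 :
  e v n1 -> e v n2 -> e k n1 -> e k n2 -> ~~ e v k ->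
  between r n1 v n2 = between r n1 k n2.
Proof.
move=> vn1 vn2 kn1 kn2 vk; have kv : ~~ e k v by rewrite e_sym.
apply/idP/idP => /orP[] inside; apply/orP;
  by [left; apply: between_nonadjacent_inside inside
     | right; apply: between_nonadjacent_inside inside].
Qed.

End Between.
End ShortcutFree.

Lemma index_sort_ltn (T : eqType) (r : T -> nat) (s : seq T) x y :
  injective r -> x \in s -> y \in s ->
  (index x (sort (relpre r leq) s) < index y (sort (relpre r leq) s)) = (r x < r y).
Proof.
move=> r_inj xs ys; set p := sort _ s.
have p_sorted : sorted (relpre r leq) p := sort_sorted (fun x y => leq_total (r x) (r y)) s.
have le_of_index := sorted_ltn_index (fun y x z => @leq_trans (r y) (r x) (r z)) p_sorted.
have [xp yp] : x \in p /\ y \in p by rewrite !mem_sort.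
case: (ltngtP (index x p) (index y p)) => [lt|gt|/index_inj eq_xy]; last by rewrite eq_xy ?ltnn.
  rewrite ltn_neqAle le_of_index // andbT; apply/esym.
  by apply: contraTneq lt => /r_inj->; rewrite ltnn.
by rewrite ltnNge le_of_index.
Qed.

Section SplitOrders.
Variables (T : eqType) (e : rel T) (cl : seq T).

Definition nonneighbours_one_sided (vs p : seq T) : bool :=
  all (fun v => all (fun n1 => all (fun n2 =>
        constant [seq between (index ^~ p) n1 k n2 | k <- cl & ~~ e v k])
      [seq n <- cl | e v n]) [seq n <- cl | e v n]) vs.

Hypotheses (e_sym : symmetric e) (cl_clique : {in cl &, forall x y, x != y -> e x y}).

Lemma shortcut4_free_one_sided r vs : injective r -> shortcut4_free e r ->
  nonneighbours_one_sided vs (sort (relpre r leq) cl).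
Proof.
move=> r_inj r_free; apply/allP=> v _.
apply/allP=> n1; rewrite mem_filter => /andP[vn1 n1cl].
apply/allP=> n2; rewrite mem_filter => /andP[vn2 n2cl].
apply: (@all_pred1_constant _ (between r n1 v n2)); rewrite all_map.
apply/allP=> k; rewrite mem_filter => /andP[vk kcl] /=.
have adj x : e v x -> x \in cl -> e k x.
  move=> vx xcl; apply: cl_clique => //; apply: contraNneq vk => ->; exact: vx.
have -> : between (index ^~ (sort (relpre r leq) cl)) n1 k n2 = between r n1 k n2.
  by rewrite /between !index_sort_ltn.
by rewrite -(between_nonadjacent e_sym r_inj r_free vn1 vn2 (adj _ vn1 n1cl) (adj _ vn2 n2cl)).
Qed.

End SplitOrders.

(* The paper's vertex [i]; unlike [inord i.-1], this reduces under [vm_compute]. *)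
Definition T6_vertex (i : nat) : 'I_9 := Ordinal (ltn_pmod i.-1 (isT : 0 < 9)).

Definition T6_vertices : seq 'I_9 := map T6_vertex (iota 1 9).
Definition T6_clique : seq 'I_9 := map T6_vertex [:: 1; 2; 3; 4; 5].
Definition T6_independent : seq 'I_9 := map T6_vertex [:: 6; 7; 8; 9].

Lemma mem_T6_vertices x : x \in T6_vertices.
Proof.
apply/mapP; exists x.+1; first by rewrite mem_iota /= ltnS ltn_ord.
by apply: val_inj; rewrite /= modn_small.
Qed.

Lemma T6_sym : symmetric T6.
Proof. by move=> x y; rewrite /T6 orbC. Qed.

Lemma T6_clique_complete : {in T6_clique &, forall x y, x != y -> T6 x y}.
Proof.
have : all (fun x => all (fun y => (x == y) || T6 x y) T6_clique) T6_clique.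
  by vm_compute.
by move/allP=> cl x y /cl/allP/[apply]/predU1P[->|//]; rewrite eqxx.
Qed.

Lemma T6_clique_orders_not_one_sided :
  all (fun p => ~~ nonneighbours_one_sided T6 T6_clique T6_independent p)
    (permutations T6_clique).
Proof. by vm_compute. Qed.

Lemma T6_not_word_representable : ~ word_representable T6.
Proof.
case=> w [w_all w_repr].
have r_inj : injective (index ^~ w) by move=> x y; apply: index_inj.
have := allP T6_clique_orders_not_one_sided (sort (relpre (index ^~ w) leq) T6_clique).
rewrite mem_permutations perm_sort => /(_ isT)/negP; apply.
exact: shortcut4_free_one_sided T6_sym T6_clique_complete _ _ r_inj
         (first_occurrence_shortcut4_free w_repr).
Qed.

Lemma alternate_map (T1 T2 : eqType) (f : T1 -> T2) (w : seq T1) x y :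
  injective f -> alternate (map f w) (f x) (f y) = alternate w x y.
Proof.
move=> f_inj; rewrite /alternate filter_map sorted_map.
rewrite (eq_filter (a2 := fun z => (z == x) || (z == y))); last first.
  by move=> z /=; rewrite !inj_eq.
by apply: eq_sorted => a b /=; rewrite inj_eq.
Qed.

Definition represents_without (T : eqType) (e : rel T) (vs : seq T) (v : T) (w : seq T) :=
  [&& v \notin w, all (fun x => (x == v) || (x \in w)) vs &
      all (fun x => all (fun y =>
        [|| x == v, y == v, x == y | alternate w x y == e x y]) vs) vs].

Lemma represents_without_del_vertex (T : finType) (e : rel T) (vs : seq T) v w :
  (forall x, x \in vs) -> represents_without e vs v w ->
  word_representable (del_vertex e v).
Proof.
move=> vs_all /and3P[vw /allP w_all /allP w_alt].
pose ws : seq (del_vertex_type v) := pmap insub w.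
have ws_val : map val ws = w.
  rewrite pmap_filter; last exact: insubK.
  apply/all_filterP/allP => x xw /=; rewrite isSome_insub.
  by apply: contraNneq vw => <-.
exists ws; split.
  move=> x; rewrite mem_pmap_sub.
  by have /predU1P[xv|//] := w_all _ (vs_all (val x)); case/eqP: (valP x).
move=> x y nxy; rewrite /del_vertex -(alternate_map _ _ _ val_inj) ws_val.
have /allP/(_ _ (vs_all (val y))) := w_alt _ (vs_all (val x)).
by rewrite (negbTE (valP x)) (negbTE (valP y)) (inj_eq val_inj) (negbTE nxy) => /eqP->.
Qed.

(* The [i]-th word (counting from 0) represents [T6] without the vertex
   [T6_vertex i.+1]. *)
Definition T6_words : seq (seq nat) := [::
  [:: 2; 3; 6; 4; 9; 5; 7; 2; 7; 9; 3; 8; 4; 8; 5; 6];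
  [:: 1; 3; 6; 5; 8; 4; 7; 1; 7; 8; 3; 9; 5; 9; 4; 6];
  [:: 1; 2; 6; 7; 5; 8; 4; 1; 8; 9; 2; 5; 9; 4; 7; 6];
  [:: 1; 2; 7; 6; 5; 3; 8; 1; 8; 9; 2; 5; 9; 6; 3; 7];
  [:: 1; 2; 7; 3; 6; 8; 4; 1; 8; 9; 2; 9; 3; 4; 6; 7];
  [:: 1; 2; 7; 5; 3; 8; 4; 1; 8; 9; 2; 5; 9; 3; 4; 7];
  [:: 1; 3; 2; 6; 5; 8; 4; 1; 8; 3; 9; 2; 5; 9; 4; 6];
  [:: 1; 2; 7; 6; 5; 4; 3; 1; 9; 2; 5; 9; 4; 6; 3; 7];
  [:: 1; 2; 7; 3; 6; 5; 8; 4; 1; 8; 2; 3; 5; 4; 6; 7]].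

Definition T6_word_without (v : 'I_9) : seq 'I_9 := map T6_vertex (nth [::] T6_words v).

Lemma T6_words_represent :
  all (fun v => represents_without T6 T6_vertices v (T6_word_without v)) T6_vertices.
Proof. by vm_compute. Qed.

Lemma T6_del_vertex_word_representable v : word_representable (del_vertex T6 v).
Proof.
apply: (represents_without_del_vertex mem_T6_vertices).
exact: allP T6_words_represent v (mem_T6_vertices v).
Qed.

Theorem theorem14 :
  ~ word_representable T6 /\
  forall v : 'I_9, word_representable (del_vertex T6 v).
Proof.
split; [exact: T6_not_word_representable | exact: T6_del_vertex_word_representable].
Qed.
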